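(* Let $F_n$ be the free group on $f_1,\dots,f_n$, $g=f_1\cdots f_n$, $R$ the set of conjugates of $f_1,\dots,f_n$. For every $\tau\in B_n$, the automorphism $a\mapsto\tau\star a$ of $F_n$ restricts to a poset isomorphism $([1,g]_R,\le_R)\to([1,g]_R,\le_R)$.
   Context: For a group $G$ with generating set $X$: $\ell_X(a)$ is the minimal $k$ with $a=x_1\cdots x_k$, $x_i\in X\cup X^{-1}$; $a\le_X b$ iff $\ell_X(a)+\ell_X(a^{-1}b)=\ell_X(b)$; $[1,b]_X=\{a:a\le_Xb\}$. The braid group $B_n=\langle\sigma_1,\dots,\sigma_{n-1}\rangle$ acts on $F_n$ by automorphisms (denoted $\tau\star a$), where $\sigma_i$ acts by $\sigma_i\star f_i=f_{i+1}$, $\sigma_i\star f_{i+1}=f_{i+1}^{-1}f_if_{i+1}$, and $\sigma_i\star f_j=f_j$ for $j\notin\{i,i+1\}$; equivalently this is the action of $B_n$, viewed as the mapping class group of the $n$-punctured disk relative to its boundary, on its fundamental group $F_n$. *)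

(* Free group F_n as words over letters (index, inverted?),
   generators f_1..f_n encoded as indices 0..n-1; group elements are words
   compared up to free reduction. *)
From mathcomp Require Import all_boot.
Set Implicit Arguments. Unset Strict Implicit. Unset Printing Implicit Defensive.

(* a letter (j, b): f_{j+1} if b = false, f_{j+1}^{-1} if b = true *)
Definition letter := (nat * bool)%type.
Definition word := seq letter.

Definition wordn (n : nat) (w : word) : bool := all (fun x => x.1 < n) w.

Definition inv_letter (x : letter) : letter := (x.1, ~~ x.2).
Definition winv (w : word) : word := rev (map inv_letter w).

Definition push (x : letter) (s : word) : word :=
  match s with
  | y :: s' => if y == inv_letter x then s' else x :: s
  | [::] => [:: x]
  end.
Definition reduce (w : word) : word := foldr push [::] w.

Definition weq (u v : word) : bool := reduce u == reduce v.

(* u is in R ∪ R^{-1}, R = conjugates of the generators f_1..f_n: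
   u = w^{-1} f_{i+1}^{±1} w *)
Definition inRR (n : nat) (u : word) : Prop :=
  exists (i : nat) (w : word) (b : bool),
    i < n /\ wordn n w /\ weq u (winv w ++ (i, b) :: w).

Definition prodR (n : nat) (k : nat) (a : word) : Prop :=
  exists xs : seq word,
    size xs = k /\ (forall x, x \in xs -> inRR n x) /\ weq (flatten xs) a.

Definition ellR (n : nat) (a : word) (k : nat) : Prop :=
  prodR n k a /\ forall m, prodR n m a -> k <= m.

Definition leR (n : nat) (a b : word) : Prop :=
  exists ka kab kb, ellR n a ka /\ ellR n (winv a ++ b) kab /\ ellR n b kb /\
                    ka + kab = kb.

Definition gcox (n : nat) : word := [seq (j, false) | j <- iota 0 n].

Definition inI (n : nat) (a : word) : Prop := leR n a (gcox n).

(* Braid action. A braid generator (i, e) stands for sigma_{i+1}^{±1}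
   (e = false: sigma, e = true: sigma^{-1}), requiring i.+1 < n. *)
Definition gen_image (s : nat * bool) (j : nat) : word :=
  let: (i, e) := s in
  if ~~ e then
    (if j == i then [:: (i.+1, false)]
     else if j == i.+1 then [:: (i.+1, true); (i, false); (i.+1, false)]
     else [:: (j, false)])
  else
    (if j == i.+1 then [:: (i, false)]
     else if j == i then [:: (i, false); (i.+1, false); (i, true)]
     else [:: (j, false)]).

Definition act_letter (s : nat * bool) (x : letter) : word :=
  if x.2 then winv (gen_image s x.1) else gen_image s x.1.

Definition act_gen (s : nat * bool) (w : word) : word :=
  flatten (map (act_letter s) w).

(* a braid tau given as a word s_1 s_2 ... s_k in the generators;
   tau * a = s_1 * (s_2 * ( ... (s_k * a))) *)
Fixpoint bact (tau : seq (nat * bool)) (w : word) : word :=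
  match tau with
  | [::] => w
  | s :: tau' => act_gen s (bact tau' w)
  end.

Definition braid_word (n : nat) (tau : seq (nat * bool)) : bool :=
  all (fun s => s.1.+1 < n) tau.

From mathcomp Require Import all_boot.
Set Implicit Arguments.
Unset Strict Implicit.
Unset Printing Implicit Defensive.

(* Each braid generator sigma_i^{+-1} acts by a morphism of F_n that sends every
   generator f_j to a conjugate of a generator and fixes g = f_1 ... f_n, and
   sigma_i^{-+1} acts by its inverse.  Hence tau acts by an automorphism which,
   like its inverse, maps R u R^{-1} into itself: it preserves the length ell_R,
   hence the order <=_R, and since it fixes g it maps [1, g]_R onto itself. *)

Lemma inv_letterK : involutive inv_letter.
Proof. by case=> a []. Qed.

Lemma winvK : involutive winv.
Proof.
move=> w; rewrite /winv map_rev revK -map_comp.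
by rewrite (eq_map (g := id)) ?map_id // => x /=; rewrite inv_letterK.
Qed.

Lemma winv_cat u v : winv (u ++ v) = winv v ++ winv u.
Proof. by rewrite /winv map_cat rev_cat. Qed.

Lemma winv_cons x u : winv (x :: u) = winv u ++ [:: inv_letter x].
Proof. by rewrite /winv map_cons rev_cons cats1. Qed.

Fixpoint reduced (s : word) : bool :=
  if s is x :: ((y :: _) as s') then (y != inv_letter x) && reduced s'
  else true.

Lemma reduced_behead x s : reduced (x :: s) -> reduced s.
Proof. by case: s => //= y s /andP[]. Qed.

Lemma push_reduced x s : reduced s -> reduced (push x s).
Proof.
case: s => [|y s] //= s_red.
case: eqP => [_|/eqP y_x]; first exact: reduced_behead s_red.
by rewrite /= s_red y_x.
Qed.

Lemma reduce_reduced w : reduced (reduce w).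
Proof. by elim: w => //= x w; apply: push_reduced. Qed.

Lemma push_invK x s : reduced s -> push x (push (inv_letter x) s) = s.
Proof.
case: s => [|y s] /=; first by rewrite eqxx.
rewrite inv_letterK; case: eqP => [->|_]; last by rewrite /= eqxx.
by case: s => [|z s] //= /andP[/negbTE ->].
Qed.

Lemma reduce_cat u v : reduce (u ++ v) = foldr push (reduce v) u.
Proof. exact: foldr_cat. Qed.

Lemma reduce_push_cat x w v : reduce (push x w ++ v) = push x (reduce (w ++ v)).
Proof.
case: w => [|y w] //=; case: (y =P inv_letter x) => [->|_] //=.
by rewrite push_invK // reduce_reduced.
Qed.

Lemma reduce_reduce_cat u v : reduce (reduce u ++ v) = reduce (u ++ v).
Proof. by elim: u => //= x u IHu; rewrite reduce_push_cat IHu. Qed.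

Lemma reduce_cat_winv u v : reduce (u ++ winv u ++ v) = reduce v.
Proof.
elim: u v => //= x u IHu v.
by rewrite winv_cons -catA IHu /= push_invK // reduce_reduced.
Qed.

Lemma reduce_winv_cat u v : reduce (winv u ++ u ++ v) = reduce v.
Proof. by rewrite -{2}[u]winvK reduce_cat_winv. Qed.

Lemma weq_refl u : weq u u. Proof. exact: eqxx. Qed.

Lemma weq_sym u v : weq u v -> weq v u. Proof. by rewrite /weq eq_sym. Qed.

Lemma weq_trans u v w : weq u v -> weq v w -> weq u w.
Proof. by rewrite /weq => /eqP -> /eqP ->. Qed.

Lemma weq_catr u u' v : weq u u' -> weq (u ++ v) (u' ++ v).
Proof.
rewrite /weq -reduce_reduce_cat -[reduce (u' ++ v)]reduce_reduce_cat.
by move=> /eqP ->.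
Qed.

Lemma weq_catl u v v' : weq v v' -> weq (u ++ v) (u ++ v').
Proof. by rewrite /weq !reduce_cat => /eqP ->. Qed.

Lemma weq_winv u v : weq u v -> weq (winv u) (winv v).
Proof.
move=> uv; apply: (@weq_trans _ (winv u ++ v ++ winv v ++ [::])).
  by rewrite /weq reduce_cat reduce_cat_winv -reduce_cat cats0.
apply: (@weq_trans _ (winv u ++ u ++ winv v ++ [::])).
  exact/weq_catl/weq_catr/weq_sym.
by rewrite /weq reduce_winv_cat cats0.
Qed.

Record word_morphism (h : word -> word) : Prop := WordMorphism {
  morphism_cat : {morph h : u v / u ++ v};
  morphism_inv_letter : forall x, h [:: inv_letter x] = winv (h [:: x]) }.

Section WordMorphism.

Variable h : word -> word.
Hypothesis h_morph : word_morphism h.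

Lemma morphism_nil : h [::] = [::].
Proof.
have := congr1 size (morphism_cat h_morph [::] [::]).
by rewrite size_cat -{1}[size _]add0n => /addIn /esym /size0nil.
Qed.

Lemma morphism_cons x u : h (x :: u) = h [:: x] ++ h u.
Proof. by rewrite -morphism_cat. Qed.

Lemma morphism_winv w : h (winv w) = winv (h w).
Proof.
elim: w => [|x w IHw]; first by rewrite morphism_nil.
rewrite winv_cons (morphism_cat h_morph) IHw (morphism_inv_letter h_morph).
by rewrite (morphism_cons x w) winv_cat.
Qed.

Lemma morphism_flatten ws : h (flatten ws) = flatten (map h ws).
Proof.
elim: ws => [|w ws IHws] /=; first exact: morphism_nil.
by rewrite (morphism_cat h_morph) IHws.
Qed.

Lemma morphism_reduce u : weq (h u) (h (reduce u)).
Proof.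
elim: u => [|x u IHu] /=; first exact: weq_refl.
apply: (@weq_trans _ (h (x :: reduce u))).
  by rewrite (morphism_cons x u) (morphism_cons x (reduce u)); apply: weq_catl.
case: (reduce u) => [|y s] /=; first exact: weq_refl.
case: (y =P inv_letter x) => [->|_]; last exact: weq_refl.
rewrite (morphism_cons x) (morphism_cons (inv_letter x) s).
by rewrite (morphism_inv_letter h_morph) /weq reduce_cat_winv.
Qed.

Lemma morphism_weq u v : weq u v -> weq (h u) (h v).
Proof.
move=> /eqP uv; apply: weq_trans (morphism_reduce u) _.
by rewrite uv; apply/weq_sym/morphism_reduce.
Qed.

Lemma morphism_weq_id :
  (forall j, weq (h [:: (j, false)]) [:: (j, false)]) -> forall w, weq (h w) w.
Proof.
move=> h_gen; elim=> [|[j b] w IHw]; first by rewrite morphism_nil.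
rewrite (morphism_cons (j, b) w).
apply: (@weq_trans _ ([:: (j, b)] ++ h w)); last exact: weq_catl.
apply: weq_catr; case: b; last exact: h_gen.
have -> : [:: (j, true)] = winv [:: (j, false)] by [].
by rewrite morphism_winv; apply/weq_winv/h_gen.
Qed.

End WordMorphism.

Lemma morphism_comp h1 h2 :
  word_morphism h1 -> word_morphism h2 -> word_morphism (h2 \o h1).
Proof.
move=> h1_morph h2_morph; split=> [u v|x] /=.
  by rewrite !morphism_cat.
by rewrite !morphism_inv_letter // morphism_winv.
Qed.

Lemma eqSnF i : (i.+1 == i) = false. Proof. by rewrite gtn_eqF. Qed.
Lemma eqnSF i : (i == i.+1) = false. Proof. by rewrite ltn_eqF. Qed.

Ltac reduce_letters :=
  repeat rewrite /= /push /inv_letter ?xpair_eqE ?eqxx ?eqSnF ?eqnSF ?andbF.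

Lemma act_gen_morphism s : word_morphism (act_gen s).
Proof.
split=> [u v|[j b]]; first by rewrite /act_gen map_cat flatten_cat.
by rewrite /act_gen /act_letter /= !cats0; case: b; rewrite ?winvK.
Qed.

Lemma bact_morphism tau : word_morphism (bact tau).
Proof.
elim: tau => [|s tau IHtau] /=; first by split.
exact: morphism_comp IHtau (act_gen_morphism s).
Qed.

Lemma bact_cat tau1 tau2 w : bact (tau1 ++ tau2) w = bact tau1 (bact tau2 w).
Proof. by elim: tau1 => //= s tau1 ->. Qed.

Definition gen_inv (s : nat * bool) : nat * bool := (s.1, ~~ s.2).

Definition binv (tau : seq (nat * bool)) : seq (nat * bool) :=
  rev (map gen_inv tau).

Lemma gen_invK : involutive gen_inv.
Proof. by case=> i []. Qed.

Lemma binvK : involutive binv.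
Proof.
move=> tau; rewrite /binv map_rev revK -map_comp.
by rewrite (eq_map (g := id)) ?map_id // => s /=; rewrite gen_invK.
Qed.

Lemma braid_word_binv n tau : braid_word n tau -> braid_word n (binv tau).
Proof. by rewrite /braid_word /binv all_rev all_map. Qed.

Lemma act_gen_invK s w : weq (act_gen (gen_inv s) (act_gen s w)) w.
Proof.
apply: (morphism_weq_id (morphism_comp (act_gen_morphism s)
                                       (act_gen_morphism (gen_inv s)))) => j /=.
case: s => i e; rewrite /weq /act_gen /act_letter /gen_image /=.
case: (eqVneq j i.+1) => [->|/negbTE ji1].
  by case: e; reduce_letters.
case: (eqVneq j i) => [->|/negbTE ji].
  by case: e; reduce_letters.
by case: e; rewrite /= ji ji1 /= ?ji ?ji1.
Qed.

Lemma bactK tau w : weq (bact (binv tau) (bact tau w)) w.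
Proof.
elim: tau w => [|s tau IHtau] w /=; first exact: weq_refl.
rewrite /binv map_cons rev_cons -cats1 bact_cat /=.
apply: weq_trans _ (IHtau w).
exact: (morphism_weq (bact_morphism _) (act_gen_invK s _)).
Qed.

Lemma bactVK tau w : weq (bact tau (bact (binv tau) w)) w.
Proof. by rewrite -{1}[tau]binvK bactK. Qed.

Lemma wordn_cat n u v : wordn n (u ++ v) = wordn n u && wordn n v.
Proof. exact: all_cat. Qed.

Lemma wordn_winv n u : wordn n (winv u) = wordn n u.
Proof. by rewrite /wordn /winv all_rev all_map. Qed.

Lemma wordn_gen_image n s j : s.1.+1 < n -> j < n -> wordn n (gen_image s j).
Proof.
case: s => i e /= lt_i1n lt_jn; have lt_in := ltnW lt_i1n.
by rewrite /gen_image; case: e; case: eqP => _; try case: eqP => _;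
  rewrite /wordn /= ?lt_i1n ?lt_in ?lt_jn.
Qed.

Lemma wordn_act_gen n s w : s.1.+1 < n -> wordn n w -> wordn n (act_gen s w).
Proof.
move=> lt_s1n; elim: w => [|[j b] w IHw] //= /andP[/= lt_jn /IHw w_n].
rewrite wordn_cat w_n andbT /act_letter.
by case: b; rewrite ?wordn_winv wordn_gen_image.
Qed.

Lemma wordn_bact n tau w :
  braid_word n tau -> wordn n w -> wordn n (bact tau w).
Proof.
elim: tau => //= s tau IHtau /andP[lt_s1n /IHtau tau_n] /tau_n.
exact: wordn_act_gen.
Qed.

Lemma act_gen_letter_conj n s k b : s.1.+1 < n -> k < n ->
  exists c k', [/\ k' < n, wordn n c &
    weq (act_gen s [:: (k, b)]) (winv c ++ (k', b) :: c)].
Proof.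
case: s => i e /= lt_i1n lt_kn; have lt_in := ltnW lt_i1n.
rewrite /weq /act_gen /act_letter /gen_image /=.
case: e => /=.
- case: (eqVneq k i.+1) => [_|_]; first by exists [::], i; case: b.
  case: (eqVneq k i) => [_|_]; last by exists [::], k; case: b.
  by exists [:: (i, true)], i.+1; rewrite /wordn /= lt_in; case: b.
- case: (eqVneq k i) => [_|_]; first by exists [::], i.+1; case: b.
  case: (eqVneq k i.+1) => [_|_]; last by exists [::], k; case: b.
  by exists [:: (i.+1, false)], i; rewrite /wordn /= lt_i1n; case: b.
Qed.

Lemma act_gen_inRR n s u : s.1.+1 < n -> inRR n u -> inRR n (act_gen s u).
Proof.
move=> lt_s1n [k [w [b [lt_kn [w_n u_conj]]]]].
have s_morph := act_gen_morphism s.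
have [c [k' [lt_k'n c_n kb_conj]]] := act_gen_letter_conj b lt_s1n lt_kn.
exists k', (c ++ act_gen s w), b; split=> //; split.
  by rewrite wordn_cat c_n wordn_act_gen.
apply: weq_trans (morphism_weq s_morph u_conj) _.
rewrite (morphism_cat s_morph) morphism_winv // morphism_cons //.
rewrite winv_cat -!catA.
apply: weq_catl; rewrite catA.
by apply: weq_trans (weq_catr _ kb_conj) _; rewrite -!catA; apply: weq_refl.
Qed.

Lemma bact_inRR n tau u :
  braid_word n tau -> inRR n u -> inRR n (bact tau u).
Proof.
elim: tau => //= s tau IHtau /andP[lt_s1n /IHtau tau_R] /tau_R.
exact: act_gen_inRR.
Qed.

Lemma act_gen_fixed_gens s l :
  {in l, forall j, (j != s.1) && (j != s.1.+1)} ->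
  act_gen s [seq (j, false) | j <- l] = [seq (j, false) | j <- l].
Proof.
case: s => i e /=; elim: l => //= j l IHl l_fixed.
rewrite (morphism_cons (act_gen_morphism _)) IHl; last first.
  by move=> k l_k; apply: l_fixed; rewrite inE l_k orbT.
have /andP[/negbTE ji /negbTE ji1] := l_fixed j (mem_head _ _).
rewrite /act_gen /act_letter /gen_image /=.
by case: e {IHl}; rewrite /= ?ji ?ji1.
Qed.

Lemma act_gen_gcox n s : s.1.+1 < n -> weq (act_gen s (gcox n)) (gcox n).
Proof.
case: s => i e /= lt_i1n.
have -> : n = i + (2 + (n - i.+2)) by rewrite addnA addn2 subnKC.
have s_morph := act_gen_morphism (i, e).
rewrite /gcox !iotaD !map_cat !(morphism_cat s_morph) add0n.
rewrite act_gen_fixed_gens; last first.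
  by move=> j; rewrite mem_iota /= => lt_ji; rewrite !ltn_eqF // ltnW.
rewrite [act_gen _ [seq _ | _ <- iota (i + 2) _]]act_gen_fixed_gens; last first.
  move=> j; rewrite mem_iota addn2 /= => /andP[le_i2j _].
  by rewrite !gtn_eqF // ltnW.
apply/weq_catl/weq_catr.
rewrite /weq /act_gen /act_letter /gen_image /=.
by case: e {s_morph}; reduce_letters.
Qed.

Lemma bact_gcox n tau :
  braid_word n tau -> weq (bact tau (gcox n)) (gcox n).
Proof.
elim: tau => [|s tau IHtau] /=; first by rewrite /weq.
case/andP=> lt_s1n /IHtau tau_g.
apply: weq_trans _ (act_gen_gcox lt_s1n).
exact: (morphism_weq (act_gen_morphism s) tau_g).
Qed.

Lemma prodR_weq n k a b : weq a b -> prodR n k a -> prodR n k b.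
Proof.
move=> ab [xs [xs_k [xs_R xs_a]]].
by exists xs; split=> //; split=> //; apply: weq_trans xs_a ab.
Qed.

Lemma prodR_morphism n h k a : word_morphism h ->
  (forall u, inRR n u -> inRR n (h u)) -> prodR n k a -> prodR n k (h a).
Proof.
move=> h_morph h_R [xs [xs_k [xs_R xs_a]]]; exists (map h xs); split.
  by rewrite size_map.
split; first by move=> _ /mapP[x /xs_R x_R ->]; apply: h_R.
by rewrite -morphism_flatten //; apply: morphism_weq.
Qed.

Lemma ellR_weq n a b k : weq a b -> ellR n a k -> ellR n b k.
Proof.
move=> ab [a_k a_min]; split; first exact: prodR_weq a_k.
by move=> m /(prodR_weq (weq_sym ab)) /a_min.
Qed.

Lemma leR_weqr n a b b' : weq b b' -> leR n a b -> leR n a b'.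
Proof.
move=> bb' [ka [kab [kb [a_ka [ab_kab [b_kb sum_k]]]]]].
exists ka, kab, kb; split=> //; split.
  exact: ellR_weq (weq_catl _ bb') ab_kab.
by split; first exact: ellR_weq bb' b_kb.
Qed.

Section RPreservingAutomorphism.

Variables (n : nat) (h h' : word -> word).
Hypotheses (h_morph : word_morphism h) (h'_morph : word_morphism h').
Hypotheses (h_R : forall u, inRR n u -> inRR n (h u))
           (h'_R : forall u, inRR n u -> inRR n (h' u)).
Hypothesis hK : forall w, weq (h' (h w)) w.

(* Stated with [h a] on the left so that the view [/ellR_morphism] cannot
   match a hypothesis on the wrong side. *)
Lemma ellR_morphism a k : ellR n (h a) k <-> ellR n a k.
Proof.
split=> [[ha_k ha_min] | [a_k a_min]]; split.
- exact: prodR_weq (hK a) (prodR_morphism h'_morph h'_R ha_k).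
- by move=> m /(prodR_morphism h_morph h_R) /ha_min.
- exact: prodR_morphism.
- by move=> m /(prodR_morphism h'_morph h'_R) /(prodR_weq (hK a)) /a_min.
Qed.

Lemma leR_morphism a b : leR n a b <-> leR n (h a) (h b).
Proof.
rewrite /leR; have -> : winv (h a) ++ h b = h (winv a ++ b).
  by rewrite (morphism_cat h_morph) morphism_winv.
by split=> -[ka [kab [kb [/ellR_morphism a_ka [/ellR_morphism ab_kab
  [/ellR_morphism b_kb sum_k]]]]]]; exists ka, kab, kb.
Qed.

Lemma inI_morphism a : weq (h (gcox n)) (gcox n) -> inI n a -> inI n (h a).
Proof. by move=> h_g /leR_morphism /(leR_weqr h_g). Qed.

End RPreservingAutomorphism.

Theorem corollary4p3 (n : nat) (tau : seq (nat * bool)) :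
  braid_word n tau ->
  (* maps [1,g]_R into [1,g]_R *)
  (forall a, wordn n a -> inI n a -> inI n (bact tau a)) /\
  (* injective *)
  (forall a b, wordn n a -> wordn n b -> inI n a -> inI n b ->
     weq (bact tau a) (bact tau b) -> weq a b) /\
  (* surjective onto [1,g]_R *)
  (forall b, wordn n b -> inI n b ->
     exists a, wordn n a /\ inI n a /\ weq (bact tau a) b) /\
  (* order preserving and reflecting *)
  (forall a b, wordn n a -> wordn n b -> inI n a -> inI n b ->
     (leR n a b <-> leR n (bact tau a) (bact tau b))).
Proof.
move=> tau_n; have tau'_n := braid_word_binv tau_n.
have tau_morph := bact_morphism tau.
have tau'_morph := bact_morphism (binv tau).
have tau_R := bact_inRR tau_n; have tau'_R := bact_inRR tau'_n.
have inI_bact := inI_morphism tau_morph tau'_morph tau_R tau'_R (bactK tau).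
have inI_bactV := inI_morphism tau'_morph tau_morph tau'_R tau_R (bactVK tau).
split; [|split; [|split]].
- by move=> a _; apply: inI_bact (bact_gcox tau_n).
- move=> a b _ _ _ _ /(morphism_weq tau'_morph) ab.
  exact: weq_trans (weq_sym (bactK tau a)) (weq_trans ab (bactK tau b)).
- move=> b b_n b_I; exists (bact (binv tau) b); split; first exact: wordn_bact.
  split; last exact: bactVK.
  exact: inI_bactV (bact_gcox tau'_n) b_I.
- move=> a b _ _ _ _.
  exact: (leR_morphism tau_morph tau'_morph tau_R tau'_R (bactK tau)).
Qed.
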